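(* Let $A$ and $N$ be real $m\times n$ matrices, let $\tilde A=A+N$, and assume $\|N\|_2\le\eta$ for some $\eta\ge0$. Let $\tilde A_1,\ldots,\tilde A_n$ be the columns of $\tilde A$, let $\tilde\rho=\mathrm{rank}(\tilde A)\ge 1$, let $\mu\ge 0$, and let $\pi:[n]\to[n]$ be a permutation such that $\tilde A_{\pi(1)},\ldots,\tilde A_{\pi(\tilde\rho)}$ are linearly independent. For $k\in\{0,\ldots,\tilde\rho\}$ let $W_k$ be the orthogonal projection onto $\mathrm{span}\{\tilde A_{\pi(1)},\ldots,\tilde A_{\pi(k)}\}$ ($W_0=0$), $W_k^\perp=I-W_k$, and $\tilde Q_k=W_{k-1}^\perp(\tilde A_{\pi(k)})/\|W_{k-1}^\perp(\tilde A_{\pi(k)})\|$ for $k\in[\tilde\rho]$. Let $s\in[\tilde\rho]$ be such that $\|W_s^\perp(\tilde A_i)\|\le\mu$ for all $i\in[n]$, and define $\tilde F_s:\mathbb R^m\to\mathbb R^s$ by $\tilde F_s(v)=(\tilde Q_{[s]})^*v$, where $\tilde Q_{[s]}$ has columns $\tilde Q_1,\ldots,\tilde Q_s$ (so $\tilde F_s$ is a $2\mu$-distortion of the columns of $\tilde A$). Then $\tilde F_s$ is a $2(\mu+\eta)$-distortion of the columns $A_1,\ldots,A_n$ of $A$, i.e. $$\sup_{i,j\in[n]}\Big|\,\|A_i-A_j\|-\|\tilde F_s(A_i)-\tilde F_s(A_j)\|\,\Big|\le 2(\mu+\eta).$$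
   Context: Vector norms are Euclidean; $\|N\|_2$ is the operator norm of $N$ induced by the Euclidean norm; $[k]=\{1,\ldots,k\}$; $^*$ denotes transpose. A map $F$ on a set $\mathcal A$ is a $\mu$-distortion of $\mathcal A$ if $\sup_{x,y\in\mathcal A}|\,\|x-y\|-\|F(x)-F(y)\|\,|\le\mu$. *)

(* Real numbers: any real closed field R : rcfType
   (the statement is purely algebraic; this includes the reals). *)
From HB Require Import structures.
From mathcomp Require Import all_boot all_order all_algebra all_fingroup.
Set Implicit Arguments. Unset Strict Implicit. Unset Printing Implicit Defensive.
Import Order.TTheory GRing.Theory Num.Theory.
Local Open Scope ring_scope.

Section Defs.
Variable R : rcfType.

Definition dotv (m : nat) (u v : 'cV[R]_m) : R := (u^T *m v) 0 0.
Definition enorm (m : nat) (v : 'cV[R]_m) : R := Num.sqrt (dotv v v).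

(* ||N||_2 <= eta, with ||N||_2 = sup_{v <> 0} ||N v|| / ||v|| the induced
   operator norm; unfolded: ||N v|| <= eta ||v|| for every v. *)
Definition opnorm_le (m n : nat) (N : 'M[R]_(m, n)) (eta : R) : Prop :=
  forall v : 'cV[R]_n, enorm (N *m v) <= eta * enorm v.

(* The columns of At in the order given by the permutation pi:
   (pcols At pi)`_k = At_{pi(k+1)} in the paper's 1-based notation. *)
Definition pcols (m n : nat) (At : 'M[R]_(m, n)) (pi : 'S_n) : seq 'cV[R]_m :=
  [seq col (pi j) At | j <- enum 'I_n].

Definition pspan (m n : nat) (At : 'M[R]_(m, n)) (pi : 'S_n) (k : nat)
  : {vspace 'cV[R]_m} := <<take k (pcols At pi)>>%VS.

Definition is_orth_proj (m : nat) (P : 'M[R]_m) (U : {vspace 'cV[R]_m}) : Prop :=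
  forall v : 'cV[R]_m,
    (P *m v \in U) /\ (forall u : 'cV[R]_m, u \in U -> dotv u (v - P *m v) = 0).

(* Q_k (0-based index k, i.e. the paper's Q_{k+1}):
   W_k^perp (At_{pi(k+1)}) / || W_k^perp (At_{pi(k+1)}) || *)
Definition Qvec (m n : nat) (At : 'M[R]_(m, n)) (pi : 'S_n) (W : nat -> 'M[R]_m)
  (k : nat) : 'cV[R]_m :=
  let w := (1%:M - W k) *m nth 0 (pcols At pi) k in (enorm w)^-1 *: w.

Definition Qmat (m n : nat) (At : 'M[R]_(m, n)) (pi : 'S_n) (W : nat -> 'M[R]_m)
  (s : nat) : 'M[R]_(m, s) :=
  \matrix_(i < m, j < s) Qvec At pi W j i 0.

Definition Fs (m n : nat) (At : 'M[R]_(m, n)) (pi : 'S_n) (W : nat -> 'M[R]_m)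
  (s : nat) (v : 'cV[R]_m) : 'cV[R]_s := (Qmat At pi W s)^T *m v.

End Defs.

From HB Require Import structures.
From mathcomp Require Import all_boot all_order all_algebra all_fingroup.
From mathcomp Require Import ring lra.
Import Order.TTheory GRing.Theory Num.Theory.
Set Implicit Arguments. Unset Strict Implicit. Unset Printing Implicit Defensive.
Local Open Scope ring_scope.

(* Write x = A_i - A_j. The Gram-Schmidt vectors Q_1, ..., Q_s are an
   orthonormal basis of the range of W_s, so ||F_s x|| = ||W_s x||, and the
   defect ||x|| - ||W_s x|| lies between 0 and ||W_s^perp x||. Since
   x = (At_i - At_j) - (N_i - N_j), the latter is at most
   ||W_s^perp At_i|| + ||W_s^perp At_j|| + ||N_i - N_j|| <= 2 mu + 2 eta. *)

Section EuclideanNorm.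
Variables (R : rcfType) (m : nat).
Implicit Types u v w : 'cV[R]_m.

Lemma dotvE u v : dotv u v = \sum_k u k 0 * v k 0.
Proof. by rewrite /dotv mxE; apply: eq_bigr => k _; rewrite mxE. Qed.

Lemma dotvC u v : dotv u v = dotv v u.
Proof. by rewrite !dotvE; apply: eq_bigr => k _; rewrite mulrC. Qed.

Lemma dotvDr u v w : dotv u (v + w) = dotv u v + dotv u w.
Proof. by rewrite !dotvE -big_split; apply: eq_bigr => k _; rewrite mxE mulrDr. Qed.

Lemma dotvZr a u v : dotv u (a *: v) = a * dotv u v.
Proof. by rewrite !dotvE mulr_sumr; apply: eq_bigr => k _; rewrite mxE mulrCA. Qed.

Lemma dotvNr u v : dotv u (- v) = - dotv u v.
Proof. by rewrite -scaleN1r dotvZr mulN1r. Qed.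

Lemma dotvBr u v w : dotv u (v - w) = dotv u v - dotv u w.
Proof. by rewrite dotvDr dotvNr. Qed.

Lemma dotvDl u v w : dotv (v + w) u = dotv v u + dotv w u.
Proof. by rewrite dotvC dotvDr !(dotvC u). Qed.

Lemma dotvZl a u v : dotv (a *: v) u = a * dotv v u.
Proof. by rewrite dotvC dotvZr dotvC. Qed.

Lemma dotvBl u v w : dotv (v - w) u = dotv v u - dotv w u.
Proof. by rewrite dotvC dotvBr !(dotvC u). Qed.

Lemma dotv0r u : dotv u 0 = 0.
Proof. by rewrite -(scale0r 0) dotvZr mul0r. Qed.

Lemma dotvv_ge0 v : 0 <= dotv v v.
Proof. by rewrite dotvE; apply: sumr_ge0 => k _; rewrite -expr2 sqr_ge0. Qed.

Lemma dotvv_eq0 v : (dotv v v == 0) = (v == 0).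
Proof.
apply/idP/eqP => [|->]; last by rewrite dotv0r.
rewrite dotvE psumr_eq0 => [/allP v0|k _]; last by rewrite -expr2 sqr_ge0.
apply/matrixP => i j; rewrite ord1 mxE.
by apply/eqP; rewrite -sqrf_eq0 expr2; apply: v0; rewrite mem_index_enum.
Qed.

Lemma enorm_ge0 v : 0 <= enorm v.
Proof. exact: sqrtr_ge0. Qed.

Lemma enorm_sqr v : enorm v ^+ 2 = dotv v v.
Proof. by rewrite sqr_sqrtr // dotvv_ge0. Qed.

Lemma enorm_eq0 v : (enorm v == 0) = (v == 0).
Proof. by rewrite -sqrf_eq0 enorm_sqr dotvv_eq0. Qed.

Lemma enormN v : enorm (- v) = enorm v.
Proof. by rewrite /enorm dotvNr dotvC dotvNr opprK. Qed.

Lemma dotv_le_enorm u v : dotv u v <= enorm u * enorm v.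
Proof.
suff sq_le : dotv u v ^+ 2 <= enorm u ^+ 2 * enorm v ^+ 2.
  apply: le_trans (ler_norm _) _.
  by rewrite -ler_sqr ?nnegrE ?mulr_ge0 ?enorm_ge0 // real_normK ?num_real // exprMn.
rewrite !enorm_sqr; have [->|u0] := eqVneq u 0.
  by rewrite dotvC !dotv0r expr0n mul0r.
have uu_gt0 : 0 < dotv u u by rewrite lt_def dotvv_eq0 u0 dotvv_ge0.
(* the residual of v along u has nonnegative squared norm *)
set t := dotv u v / dotv u u.
have residual : dotv (v - t *: u) (v - t *: u)
    = (dotv u u * dotv v v - dotv u v ^+ 2) / dotv u u.
  rewrite dotvBl !dotvBr !dotvZl !dotvZr (dotvC v u) /t.
  by field; rewrite gt_eqF.
rewrite -subr_ge0 -(pmulr_lge0 _ (_ : 0 < (dotv u u)^-1)) ?invr_gt0 //.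
by rewrite -residual dotvv_ge0.
Qed.

Lemma enormD_le u v : enorm (u + v) <= enorm u + enorm v.
Proof.
have := dotv_le_enorm u v; have := enorm_sqr (u + v).
rewrite dotvDl !dotvDr (dotvC v u) -!enorm_sqr => sqrD cs.
by rewrite -ler_sqr ?nnegrE ?addr_ge0 ?enorm_ge0 // sqrD; lra.
Qed.

Lemma enorm_isometry k (Q : 'M[R]_(m, k)) (z : 'cV[R]_k) :
  Q^T *m Q = 1%:M -> enorm (Q *m z) = enorm z.
Proof. by move=> QtQ; rewrite /enorm /dotv trmx_mul -mulmxA (mulmxA Q^T) QtQ mul1mx. Qed.

Lemma enormB_le u v : enorm (u - v) <= enorm u + enorm v.
Proof. by rewrite -(enormN v) enormD_le. Qed.

End EuclideanNorm.

Section OrthogonalProjection.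
Variables (R : rcfType) (m : nat) (P : 'M[R]_m) (U : {vspace 'cV[R]_m}).
Hypothesis P_proj : is_orth_proj P U.

Lemma mulmx_compl (x : 'cV[R]_m) : (1%:M - P) *m x = x - P *m x.
Proof. by rewrite mulmxBl mul1mx. Qed.

Lemma orth_proj_decomp (x : 'cV[R]_m) : x = P *m x + (1%:M - P) *m x.
Proof. by rewrite mulmx_compl addrC subrK. Qed.

Lemma orth_proj_pythagoras (x : 'cV[R]_m) :
  enorm x ^+ 2 = enorm (P *m x) ^+ 2 + enorm ((1%:M - P) *m x) ^+ 2.
Proof.
have [Px_in orth] := P_proj x.
rewrite {1}(orth_proj_decomp x) !enorm_sqr dotvDl !dotvDr (dotvC _ (P *m x)).
by rewrite mulmx_compl orth // add0r addr0.
Qed.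

Lemma enorm_compl_proj_le (x : 'cV[R]_m) : enorm ((1%:M - P) *m x) <= enorm x.
Proof.
rewrite -ler_sqr ?nnegrE ?enorm_ge0 // (orth_proj_pythagoras x) lerDr.
exact: sqr_ge0.
Qed.

Lemma enorm_proj_defect (x : 'cV[R]_m) :
  `|enorm x - enorm (P *m x)| <= enorm ((1%:M - P) *m x).
Proof.
have Px_le : enorm (P *m x) <= enorm x.
  rewrite -ler_sqr ?nnegrE ?enorm_ge0 // (orth_proj_pythagoras x) lerDl.
  exact: sqr_ge0.
rewrite ger0_norm ?subr_ge0 // lerBlDl {1}(orth_proj_decomp x).
exact: enormD_le.
Qed.

End OrthogonalProjection.

Lemma free_take_le (R : fieldType) (vT : vectType R) (l : seq vT) k1 k2 :
  (k1 <= k2)%N -> free (take k2 l) -> free (take k1 l).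
Proof. by move=> le_k; rewrite -(cat_take_drop k1 (take k2 l)) take_takel // => /catl_free. Qed.

Section GramSchmidt.
Variables (R : rcfType) (m : nat) (l : seq 'cV[R]_m) (W : nat -> 'M[R]_m) (s : nat).
Hypothesis s_le_size : (s <= size l)%N.
Hypothesis free_s : free (take s l).
Hypothesis W_proj : forall k, (k <= s)%N -> is_orth_proj (W k) <<take k l>>.

Definition gs_residual k : 'cV[R]_m := (1%:M - W k) *m l`_k.

Definition gs_vec k : 'cV[R]_m := (enorm (gs_residual k))^-1 *: gs_residual k.

Definition gs_mx : 'M[R]_(m, s) := \matrix_(i < m, j < s) gs_vec j i 0.

Lemma span_take_mono k1 k2 : (k1 <= k2)%N -> (<<take k1 l>> <= <<take k2 l>>)%VS.
Proof.
by move=> le_k; apply: sub_span => x; rewrite -(take_takel l le_k); apply: mem_take.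
Qed.

Lemma take_succ_span k :
  (k < size l)%N -> <<take k.+1 l>>%VS = (<<take k l>> + <[l`_k]>)%VS.
Proof. by move=> lt_k; rewrite (take_nth 0 lt_k) -cats1 span_cat span_seq1. Qed.

Lemma gs_residual_neq0 k : (k < s)%N -> gs_residual k != 0.
Proof.
move=> lt_ks; have lt_kl := leq_trans lt_ks s_le_size.
have : free (take k.+1 l).
  exact: free_take_le free_s.
rewrite (take_nth 0 lt_kl) (perm_free (introT permPl (perm_rcons _ _))) free_cons.
case/andP => notin _.
apply: contra notin; rewrite /gs_residual mulmx_compl subr_eq0 => /eqP ->.
exact: (W_proj (ltnW lt_ks) _).1.
Qed.

Lemma gs_vec_in_span k : (k < s)%N -> gs_vec k \in <<take k.+1 l>>%VS.
Proof.
move=> lt_ks; have lt_kl := leq_trans lt_ks s_le_size.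
rewrite memvZ // /gs_residual mulmx_compl take_succ_span //.
apply: memvB; first exact: subvP (addvSr _ _) _ (memv_line _).
exact: subvP (addvSl _ _) _ (W_proj (ltnW lt_ks) _).1.
Qed.

Lemma gs_vec_dotvv k : (k < s)%N -> dotv (gs_vec k) (gs_vec k) = 1.
Proof.
move=> lt_ks; have := gs_residual_neq0 lt_ks; rewrite -enorm_eq0 => nz.
by rewrite /gs_vec dotvZl dotvZr -enorm_sqr; field.
Qed.

Lemma gs_vec_orth j k : (j < k)%N -> (k < s)%N -> dotv (gs_vec j) (gs_vec k) = 0.
Proof.
move=> lt_jk lt_ks.
have j_in : gs_vec j \in <<take k l>>%VS.
  exact: subvP (span_take_mono lt_jk) _ (gs_vec_in_span (ltn_trans lt_jk lt_ks)).
by rewrite {2}/gs_vec dotvZr /gs_residual mulmx_compl (W_proj (ltnW lt_ks) _).2 ?mulr0.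
Qed.

Lemma col_gs_mx (k : 'I_s) : col k gs_mx = gs_vec k.
Proof. by apply/matrixP => i j; rewrite !mxE ord1. Qed.

Lemma dotv_gs_mx (k : 'I_s) (x : 'cV[R]_m) : (gs_mx^T *m x) k 0 = dotv (gs_vec k) x.
Proof. by rewrite /dotv !mxE; apply: eq_bigr => i _; rewrite !mxE. Qed.

Lemma gs_mx_orthonormal : gs_mx^T *m gs_mx = 1%:M.
Proof.
apply/matrixP => j k.
have -> : (gs_mx^T *m gs_mx) j k = dotv (gs_vec j) (gs_vec k).
  by rewrite -dotv_gs_mx -col_gs_mx colE mulmxA -colE [RHS]mxE.
rewrite mxE -val_eqE /=.
have [lt_jk|lt_kj|/val_inj <-] := ltngtP j k; last exact: gs_vec_dotvv.
- exact: gs_vec_orth.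
- by rewrite dotvC gs_vec_orth.
Qed.

Lemma gs_mx_tr_compl (x : 'cV[R]_m) : gs_mx^T *m ((1%:M - W s) *m x) = 0.
Proof.
apply/matrixP => k i; rewrite ord1 dotv_gs_mx mxE mulmx_compl.
apply: (W_proj (leqnn s) x).2.
exact: subvP (span_take_mono (ltn_ord k)) _ (gs_vec_in_span (ltn_ord k)).
Qed.

Lemma gs_mx_reconstruct : {in <<take s l>>%VS, forall u, gs_mx *m (gs_mx^T *m u) = u}.
Proof.
pose Pi : 'M[R]_m := gs_mx *m gs_mx^T.
suff fixed k : (k <= s)%N -> {in <<take k l>>%VS, forall u, Pi *m u = u}.
  by move=> u u_in; rewrite mulmxA (fixed s).
elim: k => [_ u|k IH lt_ks u].
  by rewrite take0 span_nil memv0 => /eqP ->; rewrite mulmx0.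
have lt_kl := leq_trans lt_ks s_le_size.
rewrite take_succ_span // => /memv_addP [a a_in [b /vlineP [c ->] ->]].
have fixed_k := IH (ltnW lt_ks).
rewrite mulmxDr fixed_k // -scalemxAr; congr (_ + c *: _).
have Pi_gs : Pi *m gs_vec k = gs_vec k.
  by rewrite -(col_gs_mx (Ordinal lt_ks)) colE -mulmxA (mulmxA gs_mx^T)
             gs_mx_orthonormal mul1mx.
have nz : enorm (gs_residual k) != 0 by rewrite enorm_eq0 gs_residual_neq0.
have -> : l`_k = W k *m l`_k + enorm (gs_residual k) *: gs_vec k.
  by rewrite /gs_vec scalerA mulfV // scale1r -orth_proj_decomp.
by rewrite mulmxDr -scalemxAr Pi_gs fixed_k // (W_proj (ltnW lt_ks) _).1.
Qed.

Lemma enorm_gs_mx_tr (x : 'cV[R]_m) : enorm (gs_mx^T *m x) = enorm (W s *m x).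
Proof.
have Wx_in := (W_proj (leqnn s) x).1.
rewrite {1}(orth_proj_decomp (W s) x) mulmxDr gs_mx_tr_compl addr0.
by rewrite -[in RHS](gs_mx_reconstruct Wx_in) (enorm_isometry _ gs_mx_orthonormal).
Qed.

End GramSchmidt.

Lemma enorm_col_le (R : rcfType) (m n : nat) (N : 'M[R]_(m, n)) (eta : R) (i : 'I_n) :
  opnorm_le N eta -> enorm (col i N) <= eta.
Proof.
have unit_delta : enorm (delta_mx i 0 : 'cV[R]_n) = 1.
  by rewrite /enorm /dotv trmx_delta mul_delta_mx mxE !eqxx sqrtr1.
by move=> /(_ (delta_mx i 0)); rewrite -colE unit_delta mulr1.
Qed.

Unset Implicit Arguments.

Theorem proposition2 (R : rcfType) (m n : nat) (A N : 'M[R]_(m, n))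
  (eta mu : R) (pi : 'S_n) (W : nat -> 'M[R]_m) (s : nat) :
  0 <= eta ->
  opnorm_le N eta ->
  let At := A + N in
  let rho := \rank At in
  (1 <= rho)%N ->
  0 <= mu ->
  free (take rho (pcols At pi)) ->
  (forall k : nat, (k <= rho)%N -> is_orth_proj (W k) (pspan At pi k)) ->
  (1 <= s <= rho)%N ->
  (forall i : 'I_n, enorm ((1%:M - W s) *m col i At) <= mu) ->
  forall i j : 'I_n,
    `| enorm (col i A - col j A)
       - enorm (Fs At pi W s (col i A) - Fs At pi W s (col j A)) |
    <= 2 * (mu + eta).
Proof.
move=> _ N_le At rho _ _ free_rho W_proj /andP [_ le_s_rho] compl_le i j.
set l := pcols At pi.
have le_s_size : (s <= size l)%N.
  by rewrite size_map size_enum_ord (leq_trans le_s_rho) ?rank_leq_col.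
have free_s : free (take s l) := free_take_le le_s_rho free_rho.
have W_proj_s k : (k <= s)%N -> is_orth_proj (W k) <<take k l>>.
  by move=> le_k; apply: W_proj (leq_trans le_k le_s_rho).
have -> : Fs At pi W s (col i A) - Fs At pi W s (col j A)
          = (gs_mx l W s)^T *m (col i A - col j A) by rewrite /Fs -mulmxBr.
rewrite enorm_gs_mx_tr //; apply: le_trans (enorm_proj_defect (W_proj_s s (leqnn s)) _) _.
have -> : col i A - col j A = (col i At - col j At) - (col i N - col j N).
  by apply/matrixP => r c; rewrite !mxE; ring.
have At_part : enorm ((1%:M - W s) *m (col i At - col j At)) <= 2 * mu.
  rewrite mulmxBr; apply: le_trans (enormB_le _ _) _.
  by have := compl_le i; have := compl_le j; lra.
have N_part : enorm ((1%:M - W s) *m (col i N - col j N)) <= 2 * eta.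
  apply: le_trans (enorm_compl_proj_le (W_proj_s s (leqnn s)) _) _.
  apply: le_trans (enormB_le _ _) _.
  by have := enorm_col_le i N_le; have := enorm_col_le j N_le; lra.
by rewrite mulmxBr; apply: le_trans (enormB_le _ _) _; lra.
Qed.
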